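(* Let $0<\alpha<1$ and $p,q>0$. If $\mathrm{Tr}\,R_{\alpha,p}(A,B)\le\mathrm{Tr}\,\mathcal{A}_{\alpha,q}(A,B)$ holds for all positive definite $2\times2$ matrices $A,B$, then $\min\{1,\alpha(1-\alpha)p\}\le q$.
   Context: For positive definite $A,B$: $R_{\alpha,p}(A,B):=\bigl(A^{\frac{1-\alpha}{2}p}B^{\alpha p}A^{\frac{1-\alpha}{2}p}\bigr)^{1/p}$ and $\mathcal{A}_{\alpha,q}(A,B):=((1-\alpha)A^q+\alpha B^q)^{1/q}$. $\mathrm{Tr}$ is the usual trace. *)

From HB Require Import structures.
From mathcomp Require Import all_boot all_order all_algebra.
From mathcomp Require Import complex.
From mathcomp Require Import reals exp.
Set Implicit Arguments. Unset Strict Implicit. Unset Printing Implicit Defensive.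
Import Order.TTheory GRing.Theory Num.Theory.
Local Open Scope ring_scope.
Local Open Scope complex_scope.

Section MatrixFunctions.
Variable R : realType.
Local Notation C := R[i].

Definition adjmx m n (A : 'M[C]_(m, n)) : 'M[C]_(n, m) := (map_mx conjc A)^T.

Definition posdef (A : 'M[C]_2) : Prop :=
  adjmx A = A /\
  forall v : 'cV[C]_2, v != 0 -> 0 < (adjmx v *m A *m v) 0 0.

(* Functional calculus f(A) for a 2x2 Hermitian matrix A via its (real)
   eigenvalues l1 >= l2: if l1 = l2 then A = l1 I and f(A) = f(l1) I;
   otherwise f(A) = (f(l1)(A - l2 I) - f(l2)(A - l1 I)) / (l1 - l2)
   (the spectral decomposition written with the spectral projections). *)
Definition mfun (f : R -> R) (A : 'M[C]_2) : 'M[C]_2 :=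
  let t := @complex.Re R (\tr A) in
  let d := @complex.Re R (\det A) in
  let s := Num.sqrt (t ^+ 2 - 4 * d) in
  let l1 := (t + s) / 2 in
  let l2 := (t - s) / 2 in
  if s == 0 then (f l1)%:C%:M
  else ((f l1 / (l1 - l2))%:C *: (A - l2%:C%:M)
        - (f l2 / (l1 - l2))%:C *: (A - l1%:C%:M)).

Definition mpow (A : 'M[C]_2) (r : R) : 'M[C]_2 := mfun (fun x => powR x r) A.

Definition Rmean (alpha p : R) (A B : 'M[C]_2) : 'M[C]_2 :=
  mpow (mpow A ((1 - alpha) * p / 2) *m mpow B (alpha * p)
          *m mpow A ((1 - alpha) * p / 2)) p^-1.

Definition Amean (alpha q : R) (A B : 'M[C]_2) : 'M[C]_2 :=
  mpow ((1 - alpha)%:C *: mpow A q + alpha%:C *: mpow B q) q^-1.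

End MatrixFunctions.

From HB Require Import structures.
From mathcomp Require Import all_boot all_order all_algebra.
From mathcomp Require Import complex.
From mathcomp Require Import reals sequences exp.
From mathcomp Require Import ring lra.
Set Implicit Arguments. Unset Strict Implicit. Unset Printing Implicit Defensive.
Import Order.TTheory GRing.Theory Num.Theory.
Local Open Scope ring_scope.

(* Suppose q < 1 and q < k p with k = alpha (1 - alpha), and let r = 1/q > 1.  Test the
   inequality on A = diag(1, e) and B = U diag(1, e) U^T, where U is the rotation with
   sin^2 = d and e^q = d^2.  The (1,1) entry of A^((1-alpha)p/2) B^(alpha p) A^((1-alpha)p/2)
   is at least 1 - d, hence so is its largest eigenvalue, and Tr R_{alpha,p}(A,B) is at least
   (1 - d)^(1/p) = 1 - d/p + O(d^2).  On the other side (1-alpha) A^q + alpha B^q has trace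
   1 + d^2 and determinant (1 - d^2)^2 k d + d^2, so its eigenvalues are 1 - k d + O(d^2) and
   O(d); as r > 1 this gives Tr A_{alpha,q}(A,B) = 1 - r k d + o(d).  Since 1/p < r k, the
   inequality fails for d small enough. *)

Section Mx2.
Variable T : comNzRingType.

Definition mx2 (a b c d : T) : 'M[T]_2 :=
  \matrix_(i, j) if i == 0 then (if j == 0 then a else b)
                 else (if j == 0 then c else d).

Lemma mx2_eta (A : 'M[T]_2) : A = mx2 (A 0 0) (A 0 1) (A 1 0) (A 1 1).
Proof.
apply/matrixP => -[[|[|//]] ?] [[|[|//]] ?]; rewrite !mxE /=.
all: by congr (A _ _); apply: val_inj.
Qed.

Lemma mxtrace_mx2 a b c d : \tr (mx2 a b c d) = a + d.
Proof. by rewrite /mxtrace !big_ord_recl big_ord0 !mxE addr0. Qed.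

Lemma det_mx2 a b c d : \det (mx2 a b c d) = a * d - b * c.
Proof.
rewrite (expand_det_row _ 0) !big_ord_recl big_ord0 /cofactor !det_mx11 !mxE /=.
by rewrite addr0 expr0 expr1 mul1r mulN1r mulrN.
Qed.

Lemma mulmx_mx2 a b c d a' b' c' d' :
  mx2 a b c d *m mx2 a' b' c' d' =
  mx2 (a * a' + b * c') (a * b' + b * d') (c * a' + d * c') (c * b' + d * d').
Proof.
apply/matrixP => -[[|[|//]] ?] [[|[|//]] ?].
all: by rewrite !mxE !big_ord_recl big_ord0 !mxE /= addr0.
Qed.

Lemma addmx_mx2 a b c d a' b' c' d' :
  mx2 a b c d + mx2 a' b' c' d' = mx2 (a + a') (b + b') (c + c') (d + d').
Proof. by apply/matrixP => -[[|[|//]] ?] [[|[|//]] ?]; rewrite !mxE. Qed.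

Lemma oppmx_mx2 a b c d : - mx2 a b c d = mx2 (- a) (- b) (- c) (- d).
Proof. by apply/matrixP => -[[|[|//]] ?] [[|[|//]] ?]; rewrite !mxE. Qed.

Lemma scalemx_mx2 k a b c d :
  k *: mx2 a b c d = mx2 (k * a) (k * b) (k * c) (k * d).
Proof. by apply/matrixP => -[[|[|//]] ?] [[|[|//]] ?]; rewrite !mxE. Qed.

Lemma scalar_mx2 a : a%:M = mx2 a 0 0 a.
Proof. by apply/matrixP => -[[|[|//]] ?] [[|[|//]] ?]; rewrite !mxE. Qed.

Definition mx2E := (addmx_mx2, oppmx_mx2, scalemx_mx2, scalar_mx2).

End Mx2.

Section RealFunctionalCalculus.
Variable R : realType.

Definition eig_hi (t d : R) := (t + Num.sqrt (t ^+ 2 - 4 * d)) / 2.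
Definition eig_lo (t d : R) := (t - Num.sqrt (t ^+ 2 - 4 * d)) / 2.

Definition mfunR (f : R -> R) (A : 'M[R]_2) : 'M[R]_2 :=
  let l1 := eig_hi (\tr A) (\det A) in
  let l2 := eig_lo (\tr A) (\det A) in
  if Num.sqrt (\tr A ^+ 2 - 4 * \det A) == 0 then (f l1)%:M
  else (f l1 / (l1 - l2)) *: (A - l2%:M) - (f l2 / (l1 - l2)) *: (A - l1%:M).

Lemma mxtrace_mfunR f A :
  \tr (mfunR f A) = f (eig_hi (\tr A) (\det A)) + f (eig_lo (\tr A) (\det A)).
Proof.
rewrite /mfunR /eig_hi /eig_lo; set s := Num.sqrt _.
case: eqP => [-> | /eqP s0]; first by rewrite mxtrace_scalar subr0 addr0 mulr2n.
rewrite raddfB /= !mxtraceZ !raddfB /= !mxtrace_scalar.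
have -> : (\tr A + s) / 2 - (\tr A - s) / 2 = s by field.
by field.
Qed.

Lemma eig_hi_ge (a b e : R) : a <= eig_hi (a + e) (a * e - b ^+ 2).
Proof.
rewrite /eig_hi (_ : _ - _ = (a - e) ^+ 2 + 4 * b ^+ 2); last by ring.
have : `|a - e| <= Num.sqrt ((a - e) ^+ 2 + 4 * b ^+ 2).
  by rewrite -sqrtr_sqr ler_wsqrtr // lerDl mulr_ge0 ?sqr_ge0.
have := ler_norm (a - e); lra.
Qed.

Lemma eig_hi_sym_ge (A : 'M[R]_2) : A 0 1 = A 1 0 -> A 0 0 <= eig_hi (\tr A) (\det A).
Proof. by rewrite [A]mx2_eta mxtrace_mx2 det_mx2 !mxE /= => ->; rewrite -expr2 eig_hi_ge. Qed.

Lemma eig_mixture (eta kappa : R) : eta <= 1 ->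
  eig_hi (1 + eta) ((1 - eta) ^+ 2 * kappa + eta) =
    1 - (1 - eta) * (1 - Num.sqrt (1 - 4 * kappa)) / 2 /\
  eig_lo (1 + eta) ((1 - eta) ^+ 2 * kappa + eta) =
    eta + (1 - eta) * (1 - Num.sqrt (1 - 4 * kappa)) / 2.
Proof.
move=> eta1; set u := Num.sqrt _; rewrite /eig_hi /eig_lo.
rewrite (_ : _ - _ = (1 - eta) ^+ 2 * (1 - 4 * kappa)); last by ring.
rewrite sqrtrM ?sqr_ge0 // sqrtr_sqr ger0_norm; last lra.
by split; rewrite -/u; field.
Qed.

End RealFunctionalCalculus.

Section RotatedDiagonal.
Variables (R : realType) (c s : R).
Hypothesis cs1 : c ^+ 2 + s ^+ 2 = 1.

(* U diag(x, y) U^T for the rotation U = [[c, -s], [s, c]] *)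
Definition rotdiag (x y : R) : 'M[R]_2 :=
  mx2 (c ^+ 2 * x + s ^+ 2 * y) (c * s * (x - y))
      (c * s * (x - y)) (s ^+ 2 * x + c ^+ 2 * y).

Lemma mxtrace_rotdiag x y : \tr (rotdiag x y) = x + y.
Proof. by rewrite mxtrace_mx2 -[RHS]mul1r -cs1; ring. Qed.

Lemma det_rotdiag x y : \det (rotdiag x y) = x * y.
Proof. by rewrite det_mx2 -[RHS]mul1r -(expr1n _ 2) -cs1; ring. Qed.

Lemma mfunR_rotdiag f x y : mfunR f (rotdiag x y) = rotdiag (f x) (f y).
Proof.
rewrite /mfunR /eig_hi /eig_lo mxtrace_rotdiag det_rotdiag.
rewrite (_ : _ - _ = (x - y) ^+ 2); last by ring.
rewrite sqrtr_sqr normr_eq0 subr_eq0.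
have [-> | xy] := eqVneq x y.
  rewrite subrr normr0 (_ : (y + y + 0) / 2 = y); last by field.
  by rewrite /rotdiag scalar_mx2 subrr mulr0 -!mulrDl [s ^+ 2 + _]addrC cs1 mul1r.
have s2 : s ^+ 2 = 1 - c ^+ 2 by rewrite -cs1; ring.
set l1 := (x + y + _) / 2; set l2 := (x + y - _) / 2.
have [[-> ->] | [-> ->]] : l1 = x /\ l2 = y \/ l1 = y /\ l2 = x.
  by rewrite /l1 /l2; case: ltgtP xy => // xy _;
    [right; rewrite ltr0_norm | left; rewrite gtr0_norm];
    rewrite ?subr_lt0 ?subr_gt0 //; split; field.
all: rewrite /rotdiag !mx2E s2; congr mx2; field; by rewrite subr_eq0 // eq_sym.
Qed.

End RotatedDiagonal.

Local Open Scope complex_scope.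

Section ComplexEmbedding.
Variable R : realType.
Local Notation cmx := (map_mx (real_complex R)).

Lemma mfun_cmx f (A : 'M[R]_2) : mfun f (cmx A) = cmx (mfunR f A).
Proof.
rewrite /mfun /mfunR /eig_hi /eig_lo trace_map_mx det_map_mx /=.
case: ifP => _; first by rewrite map_scalar_mx.
by rewrite map_mxB !map_mxZ !map_mxB !map_scalar_mx.
Qed.

Lemma posdef_mx2 (a b e : R) : 0 < a -> 0 < a * e - b ^+ 2 -> posdef (cmx (mx2 a b b e)).
Proof.
move=> a0 det0; split.
  by apply/matrixP => -[[|[|//]] ?] [[|[|//]] ?]; rewrite !mxE /= oppr0.
move=> v v0.
have {v0} : (v 0 0 != 0) || (v 1 0 != 0).
  apply: contraNT v0; rewrite negb_or !negbK => /andP[/eqP v00 /eqP v10].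
  by apply/eqP/matrixP => -[[|[|//]] ?] [[|//] ?]; rewrite mxE; [rewrite -v00 | rewrite -v10];
    congr (v _ _); apply: val_inj.
rewrite !(mxE, big_ord_recl, big_ord0, addr0) /=.
rewrite (_ : lift 0 0 = 1 :> 'I_2); last exact: val_inj.
case: (v 0 0) => p0 q0; case: (v 1 0) => p1 q1.
simpc; rewrite !eq_complex /= !negb_and => nz.
apply/andP; split; first by apply/eqP; ring.
have sqr_pos (x y : R) : (x != 0) || (y != 0) -> 0 < x ^+ 2 + y ^+ 2.
  by case/orP => ?; [apply: ltr_pwDl | apply: ltr_pwDr]; rewrite ?sqr_ge0 ?exprn_even_gt0.
have e0 : 0 < e by have := sqr_ge0 b; nra.
(* For the quadratic form Q in the goal,
   a Q = (a p0 + b p1)^2 + (a q0 + b q1)^2 + (a e - b^2) (p1^2 + q1^2), and symmetrically e Q. *)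
case/orP: nz => /sqr_pos nz.
  have := mulr_gt0 det0 nz; have := sqr_ge0 (e * p1 + b * p0); have := sqr_ge0 (e * q1 + b * q0).
  nra.
have := mulr_gt0 det0 nz; have := sqr_ge0 (a * p0 + b * p1); have := sqr_ge0 (a * q0 + b * q1).
nra.
Qed.

Lemma posdef_rotdiag (c s x y : R) : c ^+ 2 + s ^+ 2 = 1 -> 0 < x -> 0 < y ->
  posdef (cmx (rotdiag c s x y)).
Proof.
move=> cs1 x0 y0; apply: posdef_mx2; first by have [] := leP x y; nra.
by have := det_rotdiag cs1 x y; rewrite det_mx2 -expr2 => ->; rewrite mulr_gt0.
Qed.

End ComplexEmbedding.

Section Means.
Variables (R : realType) (c s alpha eps : R).
Hypothesis cs1 : c ^+ 2 + s ^+ 2 = 1.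
Local Notation cmx := (map_mx (real_complex R)).
Local Notation A := (cmx (rotdiag 1 0 1 eps)).
Local Notation B := (cmx (rotdiag c s 1 eps)).

Let cs10 : 1 ^+ 2 + 0 ^+ 2 = 1 :> R. Proof. by rewrite expr1n expr0n addr0. Qed.

Lemma posdef_rotdiag_pair : 0 < eps -> posdef A /\ posdef B.
Proof. by move=> eps0; split; apply: posdef_rotdiag. Qed.

Lemma mxtrace_Rmean_ge (p : R) : 0 < p -> ((c ^+ 2) `^ p^-1)%:C <= \tr (Rmean alpha p A B).
Proof.
move=> p0; rewrite /Rmean /mpow !mfun_cmx (mfunR_rotdiag cs10) (mfunR_rotdiag cs1) powR1 /=.
rewrite -!map_mxM mfun_cmx trace_map_mx mxtrace_mfunR lecR /=.
set M := (_ *m _ *m _).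
have M00 : M 0 0 = c ^+ 2 + s ^+ 2 * eps `^ (alpha * p).
  by rewrite /M /rotdiag !mulmx_mx2 !mxE /=; ring.
have Msym : M 0 1 = M 1 0 by rewrite /M /rotdiag !mulmx_mx2 !mxE /=; ring.
have hi : c ^+ 2 <= eig_hi (\tr M) (\det M).
  by apply: le_trans _ (eig_hi_sym_ge Msym); rewrite M00 lerDl mulr_ge0 ?sqr_ge0 ?powR_ge0.
rewrite -[leLHS]addr0; apply: lerD; last exact: powR_ge0.
apply: ge0_ler_powR; rewrite ?nnegrE ?sqr_ge0 //; first by rewrite invr_ge0 ltW.
exact: le_trans (sqr_ge0 c) hi.
Qed.

Lemma mxtrace_Amean (q eta : R) : eps `^ q = eta ->
  \tr (Amean alpha q A B) =
    (eig_hi (1 + eta) ((1 - eta) ^+ 2 * (alpha * (1 - alpha) * s ^+ 2) + eta) `^ q^-1 +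
     eig_lo (1 + eta) ((1 - eta) ^+ 2 * (alpha * (1 - alpha) * s ^+ 2) + eta) `^ q^-1)%:C.
Proof.
move=> eps_q; rewrite /Amean /mpow !mfun_cmx (mfunR_rotdiag cs10) (mfunR_rotdiag cs1).
rewrite powR1 eps_q -!map_mxZ -map_mxD mfun_cmx trace_map_mx mxtrace_mfunR.
set N := (_ *: _ + _ *: _).
have c2 : c ^+ 2 = 1 - s ^+ 2 by rewrite -cs1; ring.
have -> : \tr N = 1 + eta by rewrite /N /rotdiag !mx2E mxtrace_mx2 c2; ring.
suff -> : \det N = (1 - eta) ^+ 2 * (alpha * (1 - alpha) * s ^+ 2) + eta by [].
rewrite /N /rotdiag !mx2E det_mx2 c2; apply/eqP; rewrite -subr_eq0.
rewrite (_ : _ - _ = (alpha * s * (1 - eta)) ^+ 2 * ((1 - s ^+ 2) - c ^+ 2)); last by ring.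
by rewrite c2 subrr mulr0.
Qed.

End Means.

Local Close Scope complex_scope.

Section Estimates.
Variable R : realType.

Lemma ln_le_subr1 (x : R) : 0 < x -> ln x <= x - 1.
Proof. by move=> x0; have := expR_ge1Dx (ln x); rewrite lnK ?posrE //; lra. Qed.

Lemma powR_ge_linear (x r : R) : 0 < x -> 0 <= r -> 1 + r * (1 - x^-1) <= x `^ r.
Proof.
move=> x0 r0; rewrite /powR gt_eqF //; apply: le_trans (expR_ge1Dx _).
rewrite lerD2l ler_wpM2l //; have := @ln_le_subr1 x^-1; rewrite invr_gt0 => /(_ x0).
by rewrite lnV ?posrE //; lra.
Qed.

Lemma powR_le_quadratic (y r : R) : 0 < y -> y <= 1 -> 0 <= r ->
  y `^ r <= 1 - r * (1 - y) + (r * (1 - y)) ^+ 2.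
Proof.
move=> y0 y1 r0; set X := r * (1 - y).
have X0 : 0 <= X by rewrite mulr_ge0 // subr_ge0.
have hX : 1 + X <= expR (- (r * ln y)).
  apply: le_trans (expR_ge1Dx _); rewrite lerD2l -mulrN ler_wpM2l //.
  by have := ln_le_subr1 y0; lra.
rewrite /powR gt_eqF // -[expR _]invrK -expRN.
apply: le_trans (_ : (1 + X)^-1 <= _); first by rewrite lef_pV2 ?posrE ?expR_gt0 //; lra.
rewrite -div1r ler_pdivrMr; last lra.
have : 0 <= X ^+ 3 by rewrite exprn_ge0.
by rewrite (_ : _ * (1 + X) = 1 + X ^+ 3); [lra | ring].
Qed.

Lemma sqrt_1B4_bounds (kappa : R) : 0 <= kappa -> kappa <= 1/4 ->
  2 * kappa <= 1 - Num.sqrt (1 - 4 * kappa) <= 4 * kappa.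
Proof.
move=> k0 k4; set u := Num.sqrt _.
have u0 : 0 <= u by exact: sqrtr_ge0.
have u2 : u ^+ 2 = 1 - 4 * kappa by rewrite sqr_sqrtr //; lra.
by apply/andP; split; nra.
Qed.

Lemma powR_1B_ge (d P : R) : 0 <= d -> d <= 1/2 -> 0 <= P ->
  1 - P * d * (1 + 2 * d) <= (1 - d) `^ P.
Proof.
move=> d0 d2 P0; apply: le_trans (powR_ge_linear _ P0); last lra.
have : (1 - d)^-1 <= 1 + d * (1 + 2 * d).
  by rewrite -div1r ler_pdivrMr; nra.
move/(ler_wpM2l P0); nra.
Qed.

Lemma eig_mixture_pow_le (k d r : R) : 0 < k -> k <= 1/4 -> 0 < d -> d <= 1/2 -> 0 < r ->
  eig_hi (1 + d ^+ 2) ((1 - d ^+ 2) ^+ 2 * (k * d) + d ^+ 2) `^ r +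
  eig_lo (1 + d ^+ 2) ((1 - d ^+ 2) ^+ 2 * (k * d) + d ^+ 2) `^ r <=
  1 - r * k * d * (1 - d ^+ 2) + (r * k * d) ^+ 2 + d * d `^ (r - 1).
Proof.
move=> k0 k4 d0 d2 r0.
have [d21 kd0 kd4] : [/\ d ^+ 2 <= 1, 0 <= k * d & k * d <= 1/4] by split; nra.
have [-> ->] := eig_mixture (k * d) d21.
have /andP[lb ub] := sqrt_1B4_bounds kd0 kd4.
set w := (1 - d ^+ 2) * (1 - _) / 2.
have wl : (1 - d ^+ 2) * (k * d) <= w by rewrite /w -mulrA ler_wpM2l; nra.
have wu : w <= 2 * (k * d) by rewrite /w; nra.
have w0 : 0 <= w by apply: le_trans wl; nra.
apply: lerD.
  have y0 : 0 < 1 - (1 - d ^+ 2) * (k * d) by nra.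
  apply: (@le_trans _ _ ((1 - (1 - d ^+ 2) * (k * d)) `^ r)).
    by apply: ge0_ler_powR; rewrite ?nnegrE; lra.
  apply: le_trans (powR_le_quadratic y0 _ _) _; [nra | lra | nra].
rewrite mulr_powRB1; [|lra|lra].
by apply: ge0_ler_powR; rewrite ?nnegrE; nra.
Qed.

Lemma exists_eig_mixture_pow_lt (k P r : R) :
  0 < k -> k <= 1/4 -> 0 < P -> 1 < r -> P < r * k ->
  exists2 d : R, 0 < d <= 1/2 &
    eig_hi (1 + d ^+ 2) ((1 - d ^+ 2) ^+ 2 * (k * d) + d ^+ 2) `^ r +
    eig_lo (1 + d ^+ 2) ((1 - d ^+ 2) ^+ 2 * (k * d) + d ^+ 2) `^ r < (1 - d) `^ P.
Proof.
move=> k0 k4 P0 r1 Prk.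
set g := r * k - P; set K := r * k + (r * k) ^+ 2 + 2 * P.
have g0 : 0 < g by rewrite /g; lra.
have K0 : 0 < K by rewrite /K; have := sqr_ge0 (r * k); nra.
set z := (g / 4) `^ (r - 1)^-1.
have z0 : 0 < z by rewrite powR_gt0 //; lra.
pose d := Num.min (1/2) (Num.min (g / (2 * K)) z).
have [d2 dK dz] : [/\ d <= 1/2, d <= g / (2 * K) & d <= z] by rewrite /d !ge_min !lexx !orbT.
have d0 : 0 < d.
  by rewrite /d !lt_min z0 andbT; apply/andP; split; apply: divr_gt0; lra.
exists d; first by rewrite d0 d2.
have dz' : d `^ (r - 1) <= g / 4.
  have -> : g / 4 = z `^ (r - 1).
    by rewrite -powRrM mulVf ?powRr1 //; [lra | apply/eqP; lra].
  by apply: ge0_ler_powR; rewrite ?nnegrE; lra.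
have dK' : d * K <= g / 2 by move: dK; rewrite ler_pdivlMr; lra.
apply: le_lt_trans (eig_mixture_pow_le k0 k4 d0 d2 (lt_trans ltr01 r1)) _.
apply: lt_le_trans _ (powR_1B_ge (ltW d0) d2 (ltW P0)).
rewrite -subr_gt0.
have -> : 1 - P * d * (1 + 2 * d) - (1 - r * k * d * (1 - d ^+ 2) + (r * k * d) ^+ 2 + d * d `^ (r - 1))
  = d * (g - d `^ (r - 1) - d * (r * k * d + (r * k) ^+ 2 + 2 * P)) by rewrite /g; ring.
apply: mulr_gt0 => //.
have : d * (r * k * d) <= d * (r * k) by rewrite ler_pM2l // ler_piMr; nra.
rewrite /K in dK'; lra.
Qed.

End Estimates.

Theorem theorem4p12 (R : realType) (alpha p q : R) :
  0 < alpha -> alpha < 1 -> 0 < p -> 0 < q ->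
  (forall A B : 'M[R[i]]_2, posdef A -> posdef B ->
     \tr (Rmean alpha p A B) <= \tr (Amean alpha q A B)) ->
  Num.min 1 (alpha * (1 - alpha) * p) <= q.
Proof.
move=> a0 a1 p0 q0 H; rewrite leNgt lt_min; apply/negP => /andP[q1 qkp].
set k := alpha * (1 - alpha).
have k0 : 0 < k by rewrite mulr_gt0 // subr_gt0.
have k4 : k <= 1/4 by have := sqr_ge0 (2 * alpha - 1); rewrite /k; nra.
have P0 : 0 < p^-1 by rewrite invr_gt0.
have r1 : 1 < q^-1 by rewrite invf_gt1.
have Prk : p^-1 < q^-1 * k by rewrite mulrC ltr_pdivlMr // mulrC ltr_pdivrMr.
have [d /andP[d0 d2] hlt] := exists_eig_mixture_pow_lt k0 k4 P0 r1 Prk.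
set eps := (d ^+ 2) `^ q^-1.
have eps0 : 0 < eps by rewrite powR_gt0 // exprn_gt0.
have eps_q : eps `^ q = d ^+ 2 by rewrite -powRrM mulVf ?powRr1 ?sqr_ge0 ?gt_eqF.
set c := Num.sqrt (1 - d); set s := Num.sqrt d.
have [c2 s2] : c ^+ 2 = 1 - d /\ s ^+ 2 = d by rewrite !sqr_sqrtr; [| lra | lra].
have cs1 : c ^+ 2 + s ^+ 2 = 1 by rewrite c2 s2; ring.
have [posA posB] := posdef_rotdiag_pair cs1 eps0.
have := le_trans (mxtrace_Rmean_ge alpha eps cs1 p0) (H _ _ posA posB).
rewrite (mxtrace_Amean alpha cs1 eps_q) lecR c2 s2 -/k.
by rewrite leNgt hlt.
Qed.
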